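(* In the setting below, consider the limiting optimal energy efficiency as a function of the spectral efficiency $\mathrm{SE}\in(0,R_{\mathrm{max}}/(1+\alpha_{\mathrm{rol}})]$: $$\mathrm{EE}_\infty(\mathrm{SE})=\begin{cases}\dfrac{B\,\mathrm{SE}}{P_{\mathrm{sleep}}+\mathrm{SE}\frac{1+\alpha_{\mathrm{rol}}}{\tilde R}(P_0-P_{\mathrm{sleep}}+\gamma\tilde P^{\alpha})}, & \mathrm{SE}\le \tilde R/(1+\alpha_{\mathrm{rol}}),\\[2mm] \dfrac{B\,\mathrm{SE}}{P_0+\gamma\sigma^{2\alpha}(2^{\mathrm{SE}(1+\alpha_{\mathrm{rol}})}-1)^{\alpha}}, & \mathrm{SE}> \tilde R/(1+\alpha_{\mathrm{rol}}).\end{cases}$$ Then: (i) if $R_{\mathrm{a}}\ge R_{\mathrm{max}}$, $\mathrm{EE}_\infty$ is maximized at $\bar{\mathrm{SE}}=\mathrm{SE}_{\mathrm{max}}=R_{\mathrm{max}}/(1+\alpha_{\mathrm{rol}})$, with maximal value $\mathrm{EE}_{\mathrm{max}}=\frac{B\,\mathrm{SE}_{\mathrm{max}}}{P_0+\gamma P_{\mathrm{max}}^{\alpha}}$; (ii) if $R_{\mathrm{a}}<R_{\mathrm{max}}$, $\mathrm{EE}_\infty$ is maximized at $\bar{\mathrm{SE}}=\bar R/(1+\alpha_{\mathrm{rol}})$, where $\bar R$ is a minimizer over $x\in[R_{\mathrm{a}},R_{\mathrm{max}}]$ of the convex function $\frac{P_0+\gamma\sigma^{2\alpha}(2^{x}-1)^{\alpha}}{x}$,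 with maximal value $\mathrm{EE}_{\mathrm{max}}=\frac{B\,\bar{\mathrm{SE}}}{P_0+\gamma\sigma^{2\alpha}(2^{\bar R}-1)^{\alpha}}$.
   Context: Parameters: $T>0$, $\alpha_{\mathrm{rol}}\in[0,1]$, $B=(1+\alpha_{\mathrm{rol}})/T$, $\sigma^2>0$, $P_{\mathrm{max}}\in(0,\infty)$, $\alpha\in(0,1]$, $\gamma>0$, $P_0\ge0$, constant sleep power $P_{\mathrm{sleep}}\in[0,P_0]$. Definitions: $R_{\mathrm{max}}=\log_2(1+P_{\mathrm{max}}/\sigma^2)$; $R_{\mathrm{a}}$ is a minimizer over $x>0$ of $\frac{P_0-P_{\mathrm{sleep}}+\gamma\sigma^{2\alpha}(2^x-1)^{\alpha}}{x}$ (with $R_{\mathrm{a}}=0$ if $P_0=P_{\mathrm{sleep}},\alpha=1$); $P_{\mathrm{a}}=(2^{R_{\mathrm{a}}}-1)\sigma^2$; $\tilde R=\min(R_{\mathrm{a}},R_{\mathrm{max}})$; $\tilde P=\min(P_{\mathrm{a}},P_{\mathrm{max}})$. (The function $\mathrm{EE}_\infty$ is the large-$N$ limit of the optimal energy efficiency $R/(T P^\star_{\mathrm{cons}})$ for the single-user frame-based power minimization problem with rate $R=\mathrm{SE}(1+\alpha_{\mathrm{rol}})$.) *)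

(* R : realType, real powers via powR (a `^ x),
   with 0 `^ x = 0 for x <> 0, natural log ln. *)
From HB Require Import structures.
From mathcomp Require Import all_boot all_order all_algebra.
From mathcomp Require Import all_classical all_reals all_analysis.
Set Implicit Arguments. Unset Strict Implicit. Unset Printing Implicit Defensive.
Import Order.TTheory GRing.Theory Num.Theory.
Local Open Scope ring_scope.

Section EE.
Variable R : realType.

Definition Bw (T arol : R) : R := (1 + arol) / T.

Definition Rmax (sigma2 Pmax : R) : R := ln (1 + Pmax / sigma2) / ln 2.

Definition fa (P0 Psleep gamma alpha sigma2 x : R) : R :=
  (P0 - Psleep + gamma * sigma2 `^ alpha * (2 `^ x - 1) `^ alpha) / x.

Definition gbar (P0 gamma alpha sigma2 x : R) : R :=
  (P0 + gamma * sigma2 `^ alpha * (2 `^ x - 1) `^ alpha) / x.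

Definition Ra_spec (P0 Psleep gamma alpha sigma2 Ra : R) : Prop :=
  if (P0 == Psleep) && (alpha == 1) then Ra = 0
  else 0 < Ra /\ forall x, 0 < x ->
         fa P0 Psleep gamma alpha sigma2 Ra <= fa P0 Psleep gamma alpha sigma2 x.

Definition Pa (sigma2 Ra : R) : R := (2 `^ Ra - 1) * sigma2.
Definition Rtilde (sigma2 Pmax Ra : R) : R := Num.min Ra (Rmax sigma2 Pmax).
Definition Ptilde (sigma2 Pmax Ra : R) : R := Num.min (Pa sigma2 Ra) Pmax.

Definition EEinf (T arol sigma2 Pmax alpha gamma P0 Psleep Ra SE : R) : R :=
  let Rt := Rtilde sigma2 Pmax Ra in
  let Pt := Ptilde sigma2 Pmax Ra in
  if SE <= Rt / (1 + arol) then
    Bw T arol * SE /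
      (Psleep + SE * (1 + arol) / Rt * (P0 - Psleep + gamma * Pt `^ alpha))
  else
    Bw T arol * SE /
      (P0 + gamma * sigma2 `^ alpha * (2 `^ (SE * (1 + arol)) - 1) `^ alpha).

End EE.

From HB Require Import structures.
From mathcomp Require Import all_boot all_order all_algebra.
From mathcomp Require Import all_classical all_reals all_analysis.
From mathcomp Require Import ring lra.
Set Implicit Arguments. Unset Strict Implicit. Unset Printing Implicit Defensive.
Import Order.TTheory GRing.Theory Num.Theory.
Local Open Scope ring_scope.

(* Write c = 1 + arol, Rt = Rtilde and let
     Pfull x = P0 + gamma sigma2^alpha (2^x - 1)^alpha
   be the power consumed at full activity with rate x, so that
   gbar x = Pfull x / x.  At full activity the efficiency at rate x is
     EEfull x = B (x / c) / Pfull x = (B / c) / gbar x,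
   hence EEfull x <= EEfull y as soon as gbar y <= gbar x.
   Since Ptilde = (2^Rt - 1) sigma2, the corner of the sleep branch is
   EE (Rt / c) = EEfull Rt, and on the sleep branch EE is a ratio
   B s / (a + s K) that increases in s, so EE SE <= EEfull Rt there;
   on the other branch EE SE = EEfull (SE c).  Altogether
     EE SE <= EEfull (max Rt (SE c))   and   EE (x / c) = EEfull x (x >= Rt).
   Case (i) (Rt = Rmax) and case (ii) (Rt = Ra, with Rbar minimizing gbar
   on [Ra, Rmax]) follow at once by choosing the rates Rmax and Rbar. *)

Section RealFacts.
Variable R : realType.

Lemma ler_pdiv_cross (a b a' b' : R) :
  0 < b -> 0 < b' -> a * b' <= a' * b -> a / b <= a' / b'.
Proof. by move=> hb hb' h; rewrite ler_pdivlMr // mulrAC ler_pdivrMr. Qed.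

Lemma affine_ratio_le (B a K s m : R) :
  0 < B -> 0 <= a -> 0 < K -> 0 < s -> s <= m ->
  B * s / (a + s / m * K) <= B * m / (a + K).
Proof.
move=> hB ha hK hs hsm; have hm : 0 < m := lt_le_trans hs hsm.
have hsK : 0 < s / m * K by rewrite mulr_gt0 // divr_gt0.
apply: ler_pdiv_cross; [lra | lra |].
have -> : B * m * (a + s / m * K) = B * m * a + B * s * K by field; lra.
have : B * a * s <= B * a * m by apply: ler_wpM2l => //; rewrite mulr_ge0 // ltW.
lra.
Qed.

Lemma pow2E (x : R) : 2 `^ x = expR (x * ln 2).
Proof. by rewrite /powR pnatr_eq0. Qed.

Lemma pow2_gt1 (x : R) : 0 < x -> 1 < 2 `^ x.
Proof. by move=> hx; rewrite pow2E expR_gt1 mulr_gt0 // ln_gt0 // ltr1n. Qed.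

Lemma pow2_le (x y : R) : x <= y -> 2 `^ x <= 2 `^ y.
Proof. by apply: ler_powR; rewrite ler1n. Qed.

Lemma pow2_Rmax (sigma2 Pmax : R) :
  0 < sigma2 -> 0 < Pmax -> 2 `^ Rmax sigma2 Pmax = 1 + Pmax / sigma2.
Proof.
move=> hs hP; have hln2 : 0 < ln (2 : R) by rewrite ln_gt0 // ltr1n.
rewrite pow2E /Rmax mulfVK ?gt_eqF // lnK // posrE.
by have := divr_gt0 hP hs; lra.
Qed.

End RealFacts.

Section EnergyEfficiency.
Variables (R : realType) (T arol sigma2 Pmax alpha gamma P0 Psleep Ra : R).
Hypotheses (hT : 0 < T) (harol0 : 0 <= arol) (hsigma2 : 0 < sigma2)
  (hPmax : 0 < Pmax) (hgamma : 0 < gamma) (hPs0 : 0 <= Psleep)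
  (hPs1 : Psleep <= P0).

Local Notation c := (1 + arol).
Local Notation Rm := (Rmax sigma2 Pmax).
Local Notation Rt := (Rtilde sigma2 Pmax Ra).
Local Notation EE := (EEinf T arol sigma2 Pmax alpha gamma P0 Psleep Ra).

Definition Pfull (x : R) : R :=
  P0 + gamma * sigma2 `^ alpha * (2 `^ x - 1) `^ alpha.

Definition EEfull (x : R) : R := Bw T arol * (x / c) / Pfull x.

Lemma c_gt0 : 0 < c.
Proof. by have := harol0; lra. Qed.

Lemma Bw_gt0 : 0 < Bw T arol.
Proof. by rewrite divr_gt0 // c_gt0. Qed.

Lemma Rmax_gt0 : 0 < Rm.
Proof.
rewrite /Rmax divr_gt0 // ln_gt0 ?ltr1n //.
by have := divr_gt0 hPmax hsigma2; lra.
Qed.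

Lemma Pmax_rate : (2 `^ Rm - 1) * sigma2 = Pmax.
Proof. by rewrite pow2_Rmax // addrAC subrr add0r mulfVK ?gt_eqF. Qed.

Lemma Pfull_power (x : R) : 0 <= x ->
  Pfull x = P0 + gamma * ((2 `^ x - 1) * sigma2) `^ alpha.
Proof.
move=> hx; have h1 : 1 <= 2 `^ x by have := pow2_le hx; rewrite powRr0.
by rewrite /Pfull powRM ?subr_ge0 ?(ltW hsigma2) //; ring.
Qed.

Lemma Pfull_Rmax : Pfull Rm = P0 + gamma * Pmax `^ alpha.
Proof. by rewrite Pfull_power ?Pmax_rate // ltW // Rmax_gt0. Qed.

Lemma Pfull_gt_sleep (x : R) : 0 < x -> Psleep < Pfull x.
Proof.
move=> hx; have h21 : 0 < 2 `^ x - 1 by have := pow2_gt1 hx; lra.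
have : 0 < gamma * sigma2 `^ alpha * (2 `^ x - 1) `^ alpha.
  by rewrite !mulr_gt0 // powR_gt0.
rewrite /Pfull; have := hPs1; lra.
Qed.

Lemma gbarE (x : R) : gbar P0 gamma alpha sigma2 x = Pfull x / x.
Proof. by []. Qed.

Lemma EEfull_le (x y : R) : 0 < x -> 0 < y ->
  gbar P0 gamma alpha sigma2 y <= gbar P0 gamma alpha sigma2 x ->
  EEfull x <= EEfull y.
Proof.
move=> hx hy; pose g := gbar P0 gamma alpha sigma2.
have g_gt0 z : 0 < z -> 0 < g z.
  by move=> hz; rewrite /g gbarE divr_gt0 // (le_lt_trans hPs0 (Pfull_gt_sleep hz)).
have EEfullE z : 0 < z -> EEfull z = Bw T arol / c / g z.
  move=> hz; have hP := le_lt_trans hPs0 (Pfull_gt_sleep hz).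
  rewrite /g gbarE /EEfull; field.
  by rewrite (gt_eqF hz) (gt_eqF hP) (gt_eqF c_gt0).
move=> h; rewrite !EEfullE // ler_pM2l ?divr_gt0 ?Bw_gt0 ?c_gt0 //.
by rewrite lef_pV2 ?posrE ?g_gt0.
Qed.

Lemma Ptilde_rate : Ptilde sigma2 Pmax Ra = (2 `^ Rt - 1) * sigma2.
Proof.
have rate_le x y : x <= y -> (2 `^ x - 1) * sigma2 <= (2 `^ y - 1) * sigma2.
  by move=> hxy; rewrite ler_pM2r // lerD2r pow2_le.
rewrite /Ptilde /Rtilde /Pa; case: (leP Ra Rm) => h.
- by rewrite min_l // -Pmax_rate rate_le.
- rewrite min_r; first by rewrite Pmax_rate.
  by rewrite -{1}Pmax_rate rate_le // ltW.
Qed.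

Lemma EE_sleep (SE : R) : 0 < Rt -> SE <= Rt / c ->
  EE SE = Bw T arol * SE / (Psleep + SE / (Rt / c) * (Pfull Rt - Psleep)).
Proof.
move=> hRt hSE.
have eP : P0 - Psleep + gamma * Ptilde sigma2 Pmax Ra `^ alpha = Pfull Rt - Psleep.
  by rewrite Ptilde_rate Pfull_power ?ltW //; ring.
rewrite /EEinf /= hSE eP; congr (_ / (_ + _)); field.
by rewrite (gt_eqF hRt) (gt_eqF c_gt0).
Qed.

Lemma EE_corner : 0 < Rt -> EE (Rt / c) = EEfull Rt.
Proof.
move=> hRt; rewrite EE_sleep // divff ?gt_eqF ?divr_gt0 ?c_gt0 // mul1r.
by rewrite /EEfull; congr (_ / _); lra.
Qed.

Lemma EE_active (SE : R) : Rt / c < SE -> EE SE = EEfull (SE * c).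
Proof.
move=> h; rewrite /EEinf /= leNgt h /EEfull mulfK ?gt_eqF ?c_gt0 //.
Qed.

Lemma EE_le_EEfull (SE : R) : 0 < SE -> EE SE <= EEfull (Num.max Rt (SE * c)).
Proof.
move=> hSE; case: (leP SE (Rt / c)) => h.
- have hRt : 0 < Rt by move: (lt_le_trans hSE h); rewrite pmulr_lgt0 // invr_gt0 c_gt0.
  have -> : Num.max Rt (SE * c) = Rt by rewrite max_l // -ler_pdivlMr ?c_gt0.
  rewrite -EE_corner // !EE_sleep // divff ?lt0r_neq0 ?divr_gt0 // ?c_gt0 // mul1r.
  apply: affine_ratio_le => //; first exact: Bw_gt0.
  by have := Pfull_gt_sleep hRt; lra.
- have hRtSE : Rt < SE * c by rewrite -ltr_pdivrMr ?c_gt0.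
  by rewrite (EE_active h) (max_r (ltW hRtSE)).
Qed.

Lemma EE_rate (x : R) : 0 < x -> Rt <= x -> EE (x / c) = EEfull x.
Proof.
move=> hx; rewrite le_eqVlt => /orP[/eqP eRt|h]; first by rewrite -eRt EE_corner // eRt.
have hci : 0 < c^-1 by rewrite invr_gt0 c_gt0.
have hlt : Rt / c < x / c by rewrite ltr_pM2r.
by rewrite (EE_active hlt) (mulfVK (lt0r_neq0 c_gt0)).
Qed.

End EnergyEfficiency.

Theorem corollary2 (R : realType)
    (T arol sigma2 Pmax alpha gamma P0 Psleep Ra : R)
    (hT : 0 < T) (harol0 : 0 <= arol) (harol1 : arol <= 1)
    (hsigma2 : 0 < sigma2) (hPmax : 0 < Pmax)
    (halpha0 : 0 < alpha) (halpha1 : alpha <= 1)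
    (hgamma : 0 < gamma) (hP0 : 0 <= P0)
    (hPs0 : 0 <= Psleep) (hPs1 : Psleep <= P0)
    (hRa : Ra_spec P0 Psleep gamma alpha sigma2 Ra) :
  let EE := EEinf T arol sigma2 Pmax alpha gamma P0 Psleep Ra in
  let SEmax := Rmax sigma2 Pmax / (1 + arol) in
  (Rmax sigma2 Pmax <= Ra ->
     (forall SE, 0 < SE -> SE <= SEmax -> EE SE <= EE SEmax) /\
     EE SEmax = Bw T arol * SEmax / (P0 + gamma * Pmax `^ alpha)) /\
  (Ra < Rmax sigma2 Pmax ->
     forall Rbar, 0 < Rbar -> Ra <= Rbar -> Rbar <= Rmax sigma2 Pmax ->
       (forall x, 0 < x -> Ra <= x -> x <= Rmax sigma2 Pmax ->
          gbar P0 gamma alpha sigma2 Rbar <= gbar P0 gamma alpha sigma2 x) ->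
       let SEbar := Rbar / (1 + arol) in
       (0 < SEbar /\ SEbar <= SEmax) /\
       (forall SE, 0 < SE -> SE <= SEmax -> EE SE <= EE SEbar) /\
       EE SEbar = Bw T arol * SEbar /
         (P0 + gamma * sigma2 `^ alpha * (2 `^ Rbar - 1) `^ alpha)).
Proof.
move=> EE SEmax; have hc := c_gt0 harol0.
have EE_bound := EE_le_EEfull alpha Ra hT harol0 hsigma2 hPmax hgamma hPs0 hPs1.
have EE_at := EE_rate T alpha gamma P0 Psleep (Ra := Ra) harol0 hsigma2 hPmax.
have rate_le SE : SE <= SEmax -> SE * (1 + arol) <= Rmax sigma2 Pmax.
  by rewrite -ler_pdivlMr.
split=> [hRmRa | hRaRm Rbar hRb0 hRaRb hRbRm hmin SEbar].
- have eRt : Rtilde sigma2 Pmax Ra = Rmax sigma2 Pmax by rewrite /Rtilde min_r.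
  have hEEmax : EE SEmax = EEfull T arol sigma2 alpha gamma P0 (Rmax sigma2 Pmax).
    by apply: EE_at; rewrite ?eRt ?Rmax_gt0.
  split=> [SE hSE /rate_le hSEm|]; last by rewrite hEEmax /EEfull Pfull_Rmax.
  by rewrite hEEmax; apply: le_trans (EE_bound _ hSE) _; rewrite eRt max_l.
- have eRt : Rtilde sigma2 Pmax Ra = Ra by rewrite /Rtilde min_l // ltW.
  have hEEbar : EE SEbar = EEfull T arol sigma2 alpha gamma P0 Rbar.
    by apply: EE_at; rewrite ?eRt.
  split; first by rewrite divr_gt0 // ler_pM2r // invr_gt0.
  split=> [SE hSE /rate_le hSEm|]; last by rewrite hEEbar.
  apply: le_trans (EE_bound _ hSE) _; rewrite hEEbar eRt.
  have hSEc : 0 < SE * (1 + arol) by rewrite mulr_gt0.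
  have hx : 0 < Num.max Ra (SE * (1 + arol)) by rewrite lt_max hSEc orbT.
  apply: (EEfull_le hT harol0 hsigma2 hgamma hPs0 hPs1 hx hRb0).
  by rewrite hmin // ?le_max ?lexx // ge_max hSEm ltW.
Qed.
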